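(* Let $\mathcal K=\{\mathbf x\in\mathbb R^n : \mathbf k_i^T\mathbf x\ge 0,\ i=1,\dots,p\}$ be a polyhedral cone with non-empty topological interior, where each $\mathbf k_i$ has unit Euclidean length, and let $\mathbf x_\infty$ and $z_\infty$ denote the center of its insphere and its inradius, respectively. Define linear programs as follows. Problem $P_0$: maximize $z$ over $(\mathbf x,z)\in\mathbb R^n\times\mathbb R$ subject to $\mathbf k_i^T\mathbf x\ge z$ for all $i$ and $-1\le x_i\le 1$ for all $i=1,\dots,n$. Given Problem $P_\ell$, let $(\mathbf x_\ell,z_\ell)$ be an (arbitrarily chosen) optimal solution of $P_\ell$, let $\mathbf u_\ell=\mathbf x_\ell/\|\mathbf x_\ell\|$, and let Problem $P_{\ell+1}$ be Problem $P_\ell$ with the additional constraint $\mathbf u_\ell^T\mathbf x\le 1$. Then $\mathbf x_\ell\to\mathbf x_\infty$ and $z_\ell\to z_\infty$ as $\ell\to\infty$.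
   Context: $B_r(\mathbf x)=\{\mathbf y\in\mathbb R^n:\|\mathbf x-\mathbf y\|\le r\}$ denotes the closed ball, with $\|\cdot\|$ the Euclidean norm. The insphere of a polyhedral cone $\mathcal K$ is the largest ball contained in $\mathcal K$ whose center lies in $B_1(\mathbf 0)$ (it is unique when $\mathcal K$ has non-empty interior), and the inradius is its radius. (For each $\ell$, problem $P_\ell$ has an optimal solution and $\|\mathbf x_\ell\|\ge 1$, so $\mathbf u_\ell$ is well defined.) *)

From HB Require Import structures.
From mathcomp Require Import all_boot all_order all_algebra.
From mathcomp Require Import reals.
Set Implicit Arguments. Unset Strict Implicit. Unset Printing Implicit Defensive.
Import Order.TTheory GRing.Theory Num.Theory.
Local Open Scope ring_scope.

Section Defs.
Variables (R : realType) (n p : nat).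

Definition dotv (a b : 'rV[R]_n) : R := \sum_(i < n) a ord0 i * b ord0 i.
Definition enorm (a : 'rV[R]_n) : R := Num.sqrt (dotv a a).

Definition in_cone (k : 'I_p -> 'rV[R]_n) (x : 'rV[R]_n) : Prop :=
  forall i, 0 <= dotv (k i) x.

Definition ball_in_cone (k : 'I_p -> 'rV[R]_n) (c : 'rV[R]_n) (r : R) : Prop :=
  forall y, enorm (c - y) <= r -> in_cone k y.

Definition cone_has_interior (k : 'I_p -> 'rV[R]_n) : Prop :=
  exists c e, 0 < e /\ ball_in_cone k c e.

(* (c, r) is the insphere (center, inradius): the largest ball contained in K
   whose center lies in B_1(0). *)
Definition insphere (k : 'I_p -> 'rV[R]_n) (c : 'rV[R]_n) (r : R) : Prop :=
  [/\ enorm c <= 1, ball_in_cone k c r &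
      forall c' r', enorm c' <= 1 -> ball_in_cone k c' r' -> r' <= r].

Definition unitv (x : 'rV[R]_n) : 'rV[R]_n := (enorm x)^-1 *: x.

(* Feasible set of problem P_l, given the previous optimal points X 0, ..., X (l-1). *)
Definition feasible (k : 'I_p -> 'rV[R]_n) (X : nat -> 'rV[R]_n) (l : nat)
    (x : 'rV[R]_n) (z : R) : Prop :=
  [/\ forall i, z <= dotv (k i) x,
      forall j : 'I_n, -1 <= x ord0 j <= 1 &
      forall m, (m < l)%N -> dotv (unitv (X m)) x <= 1].

Definition optimal (k : 'I_p -> 'rV[R]_n) (X : nat -> 'rV[R]_n) (l : nat)
    (x : 'rV[R]_n) (z : R) : Prop :=
  feasible k X l x z /\ forall x' z', feasible k X l x' z' -> z' <= z.

End Defs.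

(* The insphere centre x_inf is feasible for every P_l with value z_inf, so z_inf <= z_l.
   Conversely, if k_i^T y >= z for all i, the ball of radius z/|y| about y/|y| lies in K,
   hence z <= z_inf |y|.  Applied to x_l this gives z_inf <= z_l <= z_inf |x_l|, so
   |x_l| >= 1; applied to x_l + x_inf (on which every k_i^T is at least 2 z_inf) it gives
   |x_l + x_inf| >= 2, which by the parallelogram law means
   |x_l - x_inf|^2 <= 2 (|x_l|^2 - 1).  So everything follows from |x_l| -> 1.
   If |x_m| > 1 + eps, the cut u_m^T x <= 1 keeps every later x_l at distance more than
   eps from x_m; since all x_l lie in the box [-1, 1]^n, which is covered by finitely
   many cells of diameter less than eps, this happens for finitely many m only. *)

From Stdlib Require Import Classical.
From HB Require Import structures.
From mathcomp Require Import all_boot all_order all_algebra.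
From mathcomp Require Import reals.
From mathcomp Require Import ring lra.
Import Order.TTheory GRing.Theory Num.Theory.
Local Open Scope ring_scope.

Lemma count_iota_le_card (T : finType) (f : nat -> T) (P : pred nat) M :
  {in P &, injective f} -> (count P (iota 0 M) <= #|T|)%N.
Proof.
move=> f_inj; rewrite -size_filter -(size_map f) -(card_uniqP _) ?max_card //.
rewrite map_inj_in_uniq ?filter_uniq ?iota_uniq // => x y.
by rewrite !mem_filter => /andP[Px _] /andP[Py _]; apply: f_inj.
Qed.

Lemma eventually_not_of_inj (T : finType) (f : nat -> T) (P : pred nat) :
  {in P &, injective f} -> exists N, forall l, (N <= l)%N -> ~~ P l.
Proof.
move=> f_inj; apply: NNPP => no_bound.
have unbounded N : exists2 l, (N <= l)%N & P l.
  apply: NNPP => noP; apply: no_bound; exists N => l Nl.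
  by apply/negP => Pl; apply: noP; exists l.
have many j : exists M, (j <= count P (iota 0 M))%N.
  elim: j => [|j [M jM]]; first by exists 0%N.
  have [l Ml Pl] := unbounded M; exists l.+1.
  rewrite -(subnKC (leqW Ml)) iotaD count_cat -addn1; apply: leq_add => //.
  rewrite -has_count; apply/hasP; exists l => //.
  by rewrite mem_iota add0n (subnKC (leqW Ml)) Ml /=.
have [M HM] := many #|T|.+1.
by have := leq_trans HM (count_iota_le_card _ _ _ M f_inj); rewrite ltnn.
Qed.

Section Dot.
Context {R : realType} {n : nat}.
Implicit Types (a b c : 'rV[R]_n).

Lemma dotvC a b : dotv a b = dotv b a.
Proof. by apply: eq_bigr => i _; rewrite mulrC. Qed.

Lemma dotvDl a b c : dotv (a + b) c = dotv a c + dotv b c.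
Proof. by rewrite /dotv -big_split; apply: eq_bigr => i _; rewrite !mxE mulrDl. Qed.

Lemma dotvZl t a b : dotv (t *: a) b = t * dotv a b.
Proof. by rewrite /dotv mulr_sumr; apply: eq_bigr => i _; rewrite !mxE mulrA. Qed.

Lemma dotvNl a b : dotv (- a) b = - dotv a b.
Proof. by rewrite -scaleN1r dotvZl mulN1r. Qed.

Lemma dotvBl a b c : dotv (a - b) c = dotv a c - dotv b c.
Proof. by rewrite dotvDl dotvNl. Qed.

Lemma dotvDr a b c : dotv a (b + c) = dotv a b + dotv a c.
Proof. by rewrite dotvC dotvDl !(dotvC a). Qed.

Lemma dotvZr t a b : dotv a (t *: b) = t * dotv a b.
Proof. by rewrite dotvC dotvZl dotvC. Qed.

Lemma dotvBr a b c : dotv a (b - c) = dotv a b - dotv a c.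
Proof. by rewrite dotvC dotvBl !(dotvC a). Qed.

Lemma dotv0r a : dotv a 0 = 0.
Proof. by rewrite /dotv big1 // => i _; rewrite mxE mulr0. Qed.

Lemma dotvv_ge0 a : 0 <= dotv a a.
Proof. by rewrite /dotv sumr_ge0 // => i _; rewrite -expr2 sqr_ge0. Qed.

Lemma enorm_ge0 a : 0 <= enorm a.
Proof. exact: sqrtr_ge0. Qed.

Lemma enorm_sqr a : enorm a ^+ 2 = dotv a a.
Proof. by rewrite sqr_sqrtr // dotvv_ge0. Qed.

Lemma enorm0 : enorm (0 : 'rV[R]_n) = 0.
Proof. by rewrite /enorm dotv0r sqrtr0. Qed.

Lemma enormZ t a : enorm (t *: a) = `|t| * enorm a.
Proof.
by rewrite /enorm dotvZl dotvZr mulrA -expr2 sqrtrM ?sqr_ge0 // sqrtr_sqr.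
Qed.

Lemma enormN a : enorm (- a) = enorm a.
Proof. by rewrite -scaleN1r enormZ normrN1 mul1r. Qed.

Lemma enormB a b : enorm (a - b) = enorm (b - a).
Proof. by rewrite -enormN opprB. Qed.

Lemma dotv_parallelogram a b :
  dotv (a - b) (a - b) + dotv (a + b) (a + b) = 2 * dotv a a + 2 * dotv b b.
Proof. rewrite !(dotvBl, dotvDl, dotvBr, dotvDr) (dotvC b a); ring. Qed.

Lemma dotv_cauchy_schwarz_sqr a b : dotv a b ^+ 2 <= dotv a a * dotv b b.
Proof.
set A := dotv a a; set B := dotv b b; set C := dotv a b.
have quad t : 0 <= A - 2 * t * C + t ^+ 2 * B.
  have := dotvv_ge0 (a - t *: b).
  rewrite !(dotvBl, dotvBr, dotvZl, dotvZr) (dotvC b a) -/A -/B -/C.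
  by congr (_ <= _); ring.
have [B0|B_neq0] := eqVneq B 0.
  have C0 : C = 0.
    apply/eqP/negPn/negP => C_neq0; have := quad ((A + 1) / (2 * C)).
    have -> : 2 * ((A + 1) / (2 * C)) * C = A + 1 by field.
    by rewrite B0 mulr0 addr0; lra.
  by rewrite C0 B0 expr0n mulr0.
have B_gt0 : 0 < B by rewrite lt_def B_neq0 dotvv_ge0.
have := quad (C / B).
have -> : A - 2 * (C / B) * C + (C / B) ^+ 2 * B = A - C ^+ 2 / B by field.
by rewrite subr_ge0 ler_pdivrMr.
Qed.

Lemma dotv_le_enorm a b : dotv a b <= enorm a * enorm b.
Proof.
rewrite /enorm -sqrtrM ?dotvv_ge0 //; apply: le_trans (ler_norm _) _.
by rewrite -sqrtr_sqr ler_wsqrtr // dotv_cauchy_schwarz_sqr.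
Qed.

Lemma norm_coord_le_enorm a (j : 'I_n) : `|a ord0 j| <= enorm a.
Proof.
rewrite -sqrtr_sqr ler_wsqrtr // /dotv (bigD1 j) //= -expr2 lerDl.
by rewrite sumr_ge0 // => i _; rewrite -expr2 sqr_ge0.
Qed.

Lemma dotvv_le_coord a h : (forall j, `|a ord0 j| <= h) -> dotv a a <= n%:R * h ^+ 2.
Proof.
move=> ah; have sq j : a ord0 j * a ord0 j <= h ^+ 2.
  by rewrite -expr2 -real_normK ?num_real // lerXn2r ?nnegrE // (le_trans _ (ah j)).
by rewrite (le_trans (ler_sum _ (fun j _ => sq j))) // sumr_const card_ord mulr_natl.
Qed.

Lemma enorm_unitv_le1 a : enorm (unitv a) <= 1.
Proof.
rewrite /unitv enormZ ger0_norm ?invr_ge0 ?enorm_ge0 //.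
by have [->|nz] := eqVneq (enorm a) 0; rewrite ?invr0 ?mul0r ?mulVf.
Qed.

Lemma dotv_unitv a : dotv (unitv a) a = enorm a.
Proof.
rewrite /unitv dotvZl -enorm_sqr.
by have [->|nz] := eqVneq (enorm a) 0; rewrite ?invr0 ?mul0r // expr2 mulKf.
Qed.

End Dot.

Section Packing.
Context {R : realType} {n : nat}.

Definition unit_box (v : 'rV[R]_n) : Prop := forall j, -1 <= v ord0 j <= 1.

Lemma truncn_eq_close (h x y : R) : 0 < h -> -1 <= x -> -1 <= y ->
  Num.truncn ((x + 1) / h) = Num.truncn ((y + 1) / h) -> `|x - y| < h.
Proof.
move=> h_gt0 x1 y1; set a := (x + 1) / h; set b := (y + 1) / h.
have a_ge0 : 0 <= a by rewrite divr_ge0 ?(ltW h_gt0) //; lra.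
have b_ge0 : 0 <= b by rewrite divr_ge0 ?(ltW h_gt0) //; lra.
have /andP[a1 a2] := truncn_itv a_ge0; have /andP[b1 b2] := truncn_itv b_ge0.
move=> eq_ab; rewrite eq_ab -natr1 in a1 a2; rewrite -natr1 in b2.
have : `|a - b| < 1 by rewrite ltr_norml; apply/andP; split; lra.
rewrite -mulrBl normrM [`|h^-1|]gtr0_norm ?invr_gt0 // ltr_pdivrMr // mul1r.
by rewrite opprD addrACA subrr addr0.
Qed.

Lemma unit_box_grid (e : R) : 0 < e ->
  exists (T : finType) (cell : 'rV[R]_n -> T), forall v w,
    unit_box v -> unit_box w -> cell v = cell w -> enorm (v - w) < e.
Proof.
move=> e_gt0; pose h := e / n.+1%:R.
have h_gt0 : 0 < h by rewrite divr_gt0.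
pose idx x := Num.truncn ((x + 1) / h); pose K := Num.truncn (2 / h).
have idx_le x : -1 <= x <= 1 -> (idx x <= K)%N.
  by case/andP=> x1 x2; apply: le_truncn; rewrite ler_pM2r ?invr_gt0 //; lra.
exists {ffun 'I_n -> 'I_K.+1}, (fun v => [ffun j => inord (idx (v ord0 j))]).
move=> v w v_box w_box eq_cell.
have close j : `|(v - w) ord0 j| <= h.
  have := congr1 (fun f : {ffun 'I_n -> 'I_K.+1} => val (f j)) eq_cell.
  rewrite /= !ffunE !inordK ?ltnS ?idx_le // !mxE => /truncn_eq_close.
  case/andP: (v_box j) => v1 _; case/andP: (w_box j) => w1 _.
  by move/(_ h_gt0 v1 w1)/ltW.
have : enorm (v - w) ^+ 2 < e ^+ 2.
  rewrite enorm_sqr (le_lt_trans (dotvv_le_coord _ _ close)) //.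
  have -> : e = h * n.+1%:R by rewrite /h mulfVK ?pnatr_eq0.
  by rewrite -natr1; have := ler0n R n; nra.
by have := enorm_ge0 (v - w); nra.
Qed.

Lemma separated_eventually (e : R) (Y : nat -> 'rV[R]_n) (P : pred nat) :
  0 < e -> (forall l, unit_box (Y l)) ->
  (forall m l, (m < l)%N -> P m -> e <= enorm (Y m - Y l)) ->
  exists N, forall l, (N <= l)%N -> ~~ P l.
Proof.
move=> e_gt0 Y_box sep; have [T [cell cellP]] := unit_box_grid e e_gt0.
apply: (@eventually_not_of_inj T (cell \o Y)) => x y Px Py /= eq_cell.
have close := cellP _ _ (Y_box x) (Y_box y) eq_cell.
case: (ltngtP x y) => // [xy|yx].
  by have := sep _ _ xy Px; rewrite leNgt close.
by have := sep _ _ yx Py; rewrite enormB leNgt close.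
Qed.

End Packing.

Section Cone.
Context {R : realType} {n p : nat} {k : 'I_p -> 'rV[R]_n}.
Hypothesis k_unit : forall i, enorm (k i) = 1.

Lemma ball_in_cone_of_dot c r : (forall i, r <= dotv (k i) c) -> ball_in_cone k c r.
Proof.
move=> kc y cy i; have := dotv_le_enorm (k i) (c - y).
by rewrite k_unit mul1r dotvBr; have := kc i; lra.
Qed.

Lemma dot_of_ball_in_cone c r i : 0 <= r -> ball_in_cone k c r -> r <= dotv (k i) c.
Proof.
move=> r_ge0 ball; have := ball (c - r *: k i).
rewrite opprB addrC subrK enormZ k_unit mulr1 ger0_norm // lexx => /(_ isT i).
by rewrite dotvBr dotvZr -enorm_sqr k_unit expr1n mulr1; lra.
Qed.

Section Insphere.
Context {xinf : 'rV[R]_n} {zinf : R}.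
Hypothesis ins : insphere k xinf zinf.

Lemma inradius_ge0 : 0 <= zinf.
Proof.
case: ins => _ _ max; apply: (max 0 0); first by rewrite enorm0.
by apply: ball_in_cone_of_dot => i; rewrite dotv0r.
Qed.

Lemma insphere_dot i : zinf <= dotv (k i) xinf.
Proof. by case: ins => _ ball _; apply: dot_of_ball_in_cone inradius_ge0 ball. Qed.

(* With no constraints K is the whole space and contains balls of every radius. *)
Lemma insphere_p_gt0 : (0 < p)%N.
Proof.
rewrite lt0n; apply/eqP => p0.
have ball : ball_in_cone k 0 (zinf + 1).
  by move=> y _ i; have := leq_trans (ltn_ord i) (eq_leq p0).
by case: ins => _ _ /(_ 0 (zinf + 1)); rewrite enorm0 ler01 => /(_ isT ball); lra.
Qed.

Lemma dot_le_inradius y z : (forall i, z <= dotv (k i) y) -> z <= zinf * enorm y.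
Proof.
move=> zy; have [y0|y_neq0] := eqVneq (enorm y) 0.
  apply: le_trans (zy (Ordinal insphere_p_gt0)) _.
  by rewrite (le_trans (dotv_le_enorm _ _)) // y0 !mulr0.
have y_gt0 : 0 < enorm y by rewrite lt_def y_neq0 enorm_ge0.
rewrite -ler_pdivrMr //.
case: ins => _ _ max; apply: (max ((enorm y)^-1 *: y)).
  by rewrite enormZ ger0_norm ?invr_ge0 ?enorm_ge0 // mulVf.
by apply: ball_in_cone_of_dot => i; rewrite dotvZr mulrC ler_pM2l ?invr_gt0 ?zy.
Qed.

Lemma inradius_gt0 : cone_has_interior k -> 0 < zinf.
Proof.
case=> c [e [e_gt0 ball]].
have := dot_le_inradius c e (fun i => dot_of_ball_in_cone c e i (ltW e_gt0) ball).
by have := inradius_ge0; have := enorm_ge0 c; nra.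
Qed.

Section Iterates.
Context {X : nat -> 'rV[R]_n} {Z : nat -> R}.
Hypotheses (k_interior : cone_has_interior k) (opt : forall l, optimal k X l (X l) (Z l)).

Lemma feasible_insphere l : feasible k X l xinf zinf.
Proof.
case: ins => xinf_le1 _ _; split; first exact: insphere_dot.
  by move=> j; rewrite -ler_norml (le_trans (norm_coord_le_enorm _ _)).
move=> m _; rewrite (le_trans (dotv_le_enorm _ _)) // mulr_ile1 ?enorm_ge0 //.
exact: enorm_unitv_le1.
Qed.

Lemma inradius_le_opt l : zinf <= Z l.
Proof. exact: (opt l).2 _ _ (feasible_insphere l). Qed.

Lemma opt_dot l i : Z l <= dotv (k i) (X l).
Proof. by case: (opt l) => -[]. Qed.

Lemma enorm_opt_ge1 l : 1 <= enorm (X l).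
Proof.
have := dot_le_inradius _ _ (opt_dot l); have := inradius_le_opt l.
by have := inradius_gt0 k_interior; nra.
Qed.

Lemma enorm_opt_sub_insphere l :
  enorm (X l - xinf) ^+ 2 <= 2 * (enorm (X l) ^+ 2 - 1).
Proof.
have sum_ge2 : 2 <= enorm (X l + xinf).
  have : 2 * zinf <= zinf * enorm (X l + xinf).
    apply: dot_le_inradius => i; rewrite dotvDr.
    by have := opt_dot l i; have := insphere_dot i; have := inradius_le_opt l; lra.
  by have := inradius_gt0 k_interior; nra.
have xinf_le1 : enorm xinf <= 1 by case: ins.
have := dotv_parallelogram (X l) xinf; rewrite -!enorm_sqr.
by have := enorm_ge0 xinf; nra.
Qed.

Lemma enorm_opt_sub_ge m l : (m < l)%N -> enorm (X m) - 1 <= enorm (X m - X l).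
Proof.
move=> ml; have [[_ _ cut] _] := opt l.
have := dotv_le_enorm (unitv (X m)) (X m - X l); rewrite dotvBr dotv_unitv.
have := cut m ml; have := enorm_unitv_le1 (X m); have := enorm_ge0 (X m - X l).
nra.
Qed.

Lemma enorm_opt_cvg1 (eps : R) : 0 < eps ->
  exists N, forall l, (N <= l)%N -> enorm (X l) <= 1 + eps.
Proof.
move=> eps_gt0; have box l : unit_box (X l) by case: (opt l) => -[].
pose far := [pred m | 1 + eps < enorm (X m)].
have sep m l : (m < l)%N -> far m -> eps <= enorm (X m - X l).
  by move=> ml /= m_far; have := enorm_opt_sub_ge m l ml; lra.
have [N HN] := separated_eventually eps X far eps_gt0 box sep.
by exists N => l /HN; rewrite /= -leNgt.
Qed.

Lemma opt_cvg_insphere (e : R) : 0 < e ->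
  exists N, forall l, (N <= l)%N -> enorm (X l - xinf) < e.
Proof.
move=> e_gt0; pose d := e ^+ 2 / (e ^+ 2 + 6).
have e2_gt0 : 0 < e ^+ 2 by rewrite exprn_gt0.
have e26_gt0 : 0 < e ^+ 2 + 6 by lra.
have d_def : d * (e ^+ 2 + 6) = e ^+ 2 by rewrite /d mulfVK ?lt0r_neq0.
have d_gt0 : 0 < d by rewrite divr_gt0.
have [N HN] := enorm_opt_cvg1 d d_gt0; exists N => l /HN Xl_le.
have d_lt1 : d < 1 by nra.
have := enorm_opt_sub_insphere l; have := enorm_opt_ge1 l => Xl_ge1 dist_le.
have : enorm (X l - xinf) ^+ 2 < e ^+ 2 by nra.
by have := enorm_ge0 (X l - xinf); nra.
Qed.

Lemma opt_cvg_inradius (e : R) : 0 < e ->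
  exists N, forall l, (N <= l)%N -> `|Z l - zinf| < e.
Proof.
move=> e_gt0; pose d := e / (zinf + 1).
have zinf1_gt0 : 0 < zinf + 1 by have := inradius_ge0; lra.
have d_def : d * (zinf + 1) = e by rewrite /d mulfVK ?lt0r_neq0.
have d_gt0 : 0 < d by rewrite divr_gt0.
have [N HN] := enorm_opt_cvg1 d d_gt0; exists N => l /HN Xl_le.
rewrite ger0_norm ?subr_ge0 ?inradius_le_opt //.
have := dot_le_inradius _ _ (opt_dot l).
by have := inradius_ge0; nra.
Qed.

End Iterates.
End Insphere.
End Cone.

Theorem theorem1 (R : realType) (n p : nat) (k : 'I_p -> 'rV[R]_n)
    (xinf : 'rV[R]_n) (zinf : R) (X : nat -> 'rV[R]_n) (Z : nat -> R) :
  (forall i, enorm (k i) = 1) ->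
  cone_has_interior k ->
  insphere k xinf zinf ->
  (forall l, optimal k X l (X l) (Z l)) ->
  (forall e : R, 0 < e -> exists N : nat, forall l, (N <= l)%N ->
      enorm (X l - xinf) < e) /\
  (forall e : R, 0 < e -> exists N : nat, forall l, (N <= l)%N ->
      `|Z l - zinf| < e).
Proof.
move=> k_unit k_interior ins opt.
split; [exact (opt_cvg_insphere k_unit ins k_interior opt) |
       exact (opt_cvg_inradius k_unit ins opt)].
Qed.
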